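(* Let $\mathbb Y$ be a real locally convex Hausdorff topological vector space with topological dual $\mathbb Y^\sharp$, and let $d:\mathbb Y\times\mathbb Y^\sharp\to\mathbb R$ be the duality bilinear form $d(y,y^\sharp)=\langle y,y^\sharp\rangle$. Let $\mathbb X,\mathbb X^\sharp$ be sets and $c:\mathbb X\times\mathbb X^\sharp\to\overline{\mathbb R}$ a coupling. Let $K:\mathbb X\times\mathbb Y\to\overline{\mathbb R}$, $f:\mathbb X\to\overline{\mathbb R}$, and $g:\mathbb Y\to\,]-\infty,+\infty]$. For $x^\sharp\in\mathbb X^\sharp$ let $K_{x^\sharp}(y)=\inf_{x\in\mathbb X}\big((-c(x,x^\sharp))\mathbin{\overset{\cdot}{+}} K(x,y)\big)$. Suppose that (i) $g$ is a proper convex function; (ii) for every $x^\sharp\in\mathbb X^\sharp$, $K_{x^\sharp}$ is a proper convex function; (iii) for every $x^\sharp\in\mathbb X^\sharp$, $g$ is continuous at some point where $K_{x^\sharp}$ is finite. Then: if $f(x)=\inf_{y\in\mathbb Y}\big(K(x,y)\mathbin{\overset{\cdot}{+}} g(y)\big)$ for all $x\in\mathbb X$, it follows that $f^{c}(x^\sharp)=\inf_{y^\sharp\in\mathbb Y^\sharp}\big(K^{c\mathbin{\underset{\cdot}{+}} d}(x^\sharp,y^\sharp)\mathbin{\overset{\cdot}{+}} g^{-d}(y^\sharp)\big)$ for all $x^\sharp\in\mathbb X^\sharp$.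
   Context: $\overline{\mathbb R}=[-\infty,+\infty]$. The Moreau lower addition $\mathbin{\underset{\cdot}{+}}$ is usual addition extended by $(+\infty)\mathbin{\underset{\cdot}{+}}(-\infty)=(-\infty)\mathbin{\underset{\cdot}{+}}(+\infty)=-\infty$; the Moreau upper addition $\mathbin{\overset{\cdot}{+}}$ is usual addition extended by $(+\infty)\mathbin{\overset{\cdot}{+}}(-\infty)=(-\infty)\mathbin{\overset{\cdot}{+}}(+\infty)=+\infty$. $f^{c}(x^\sharp)=\sup_{x}\big(c(x,x^\sharp)\mathbin{\underset{\cdot}{+}}(-f(x))\big)$; $g^{-d}(y^\sharp)=\sup_{y}\big((-\langle y,y^\sharp\rangle)\mathbin{\underset{\cdot}{+}}(-g(y))\big)$; $K^{c\mathbin{\underset{\cdot}{+}} d}(x^\sharp,y^\sharp)=\sup_{x\in\mathbb X,y\in\mathbb Y}\big(c(x,x^\sharp)\mathbin{\underset{\cdot}{+}}\langle y,y^\sharp\rangle\mathbin{\underset{\cdot}{+}}(-K(x,y))\big)$. A function is proper if it never takes the value $-\infty$ and is not identically $+\infty$. *)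

From HB Require Import structures.
From mathcomp Require Import all_boot all_order all_algebra.
From mathcomp Require Import all_classical all_reals all_analysis.
Set Implicit Arguments. Unset Strict Implicit. Unset Printing Implicit Defensive.
Import Order.TTheory GRing.Theory Num.Theory.
Local Open Scope classical_set_scope.
Local Open Scope ring_scope.
Local Open Scope ereal_scope.

(* In mathcomp-analysis, [x + y] on \bar R is the Moreau LOWER addition
   (+oo + -oo = -oo) and [(x + y)%dE] (dual_adde) is the Moreau UPPER addition
   (+oo + -oo)%dE = +oo). *)

Section Defs.
Variable R : realType.

(* convexity of an extended-real valued function on a real vector space,
   with the upper-addition convention (equivalent to convexity of the epigraph) *)
Definition econvex (Y : lmodType R) (h : Y -> \bar R) :=
  forall (y1 y2 : Y) (t : R), (0 < t < 1)%R ->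
    h (t *: y1 + (1 - t) *: y2)%R <= ((t%:E * h y1) + ((1 - t)%:E * h y2))%dE.

Definition eproper (T : Type) (h : T -> \bar R) :=
  (forall y, h y != -oo) /\ (exists y, h y != +oo).

Definition tdual (Y : tvsType R) : set {linear Y -> R^o} :=
  [set l | continuous (l : Y -> R^o)].

Definition Kxs (X Xs Y : Type) (c : X -> Xs -> \bar R) (K : X -> Y -> \bar R)
  (xs : Xs) (y : Y) : \bar R :=
  ereal_inf (range (fun x => ((- c x xs) + K x y)%dE)).

Definition cconj (X Xs : Type) (c : X -> Xs -> \bar R) (f : X -> \bar R)
  (xs : Xs) : \bar R :=
  ereal_sup (range (fun x => c x xs + - f x)).

Definition mdconj (Y : tvsType R) (g : Y -> \bar R) (ys : {linear Y -> R^o})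
  : \bar R :=
  ereal_sup (range (fun y => (- (ys y : R))%:E + - g y)).

Definition cdconj (X Xs : Type) (Y : tvsType R) (c : X -> Xs -> \bar R)
  (K : X -> Y -> \bar R) (xs : Xs) (ys : {linear Y -> R^o}) : \bar R :=
  ereal_sup (range (fun p : X * Y => c p.1 xs + (ys p.2 : R)%:E + - K p.1 p.2)).

End Defs.

Lemma lower_add_check (R : realType) : (+oo + -oo)%E = -oo :> \bar R.
Proof. by []. Qed.
Lemma upper_add_check (R : realType) : (+oo + -oo)%dE = +oo :> \bar R.
Proof. by []. Qed.

From HB Require Import structures.
From mathcomp Require Import all_boot all_order all_algebra.
From mathcomp Require Import all_classical all_reals all_analysis.
From mathcomp Require Import ring lra.
Set Implicit Arguments. Unset Strict Implicit. Unset Printing Implicit Defensive.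
Import Order.TTheory GRing.Theory Num.Theory DualAddTheory.
Local Open Scope classical_set_scope.
Local Open Scope ring_scope.

(* Since K^{c+d}(x#, .) is the Fenchel conjugate of K_{x#} and f^c(x#) is
   -inf_y (K_{x#} y + g y), the statement is Fenchel-Rockafellar duality for
   the pair (K_{x#}, g).  Weak duality holds termwise.  For strong duality let
   a = inf (h + g) be finite: the points (y - z, r + s - a) with h y <= r and
   g z <= s generate a convex cone whose lower boundary q is sublinear, finite
   because h + g >= a, and bounded above near 0 because g is continuous at a
   point of dom h.  The algebraic Hahn-Banach theorem (Zorn's lemma on
   dominated partial linear maps) yields a linear l <= q; it is continuous,
   and l y - l z <= h y + g z - a is the required dual certificate. *)

Section HahnBanach.
Variables (R : realType) (V : lmodType R) (q : V -> R).
Hypothesis qD : forall u v, q (u + v) <= q u + q v.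
Hypothesis qZ : forall (r : R) u, 0 < r -> q (r *: u) = r * q u.

(* Partial linear maps are encoded by their graphs, so that the union of a
   chain is again one. *)
Definition dominated_linear_graph (G : set (V * R)) :=
  [/\ forall y r r', G (y, r) -> G (y, r') -> r = r',
      forall a y1 r1 y2 r2, G (y1, r1) -> G (y2, r2) ->
        G (a *: y1 + y2, a * r1 + r2) &
      forall y r, G (y, r) -> r <= q y].

Lemma sublinear0 : q 0 = 0.
Proof. by have := @qZ 2 0 (ltr0Sn R 1); rewrite scaler0 => h; lra. Qed.

Lemma dominated_linear_graph_bigcup (F : set (set (V * R))) :
  F `<=` dominated_linear_graph -> total_on F subset ->
  dominated_linear_graph (\bigcup_(G in F) G).
Proof.
move=> FP Ftot.
have common p1 p2 : (\bigcup_(G in F) G) p1 -> (\bigcup_(G in F) G) p2 ->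
    exists2 G, F G & G p1 /\ G p2.
  move=> [G1 FG1 G1p1] [G2 FG2 G2p2].
  have [G12|G21] := Ftot _ _ FG1 FG2; first by exists G2 => //; split => //; apply: G12.
  by exists G1 => //; split => //; apply: G21.
split.
- move=> y r r' /common /[apply] -[G FG [Gr Gr']].
  by have [Gfun _ _] := FP _ FG; exact: Gfun Gr Gr'.
- move=> a y1 r1 y2 r2 /common /[apply] -[G FG [G1 G2]].
  by exists G => //; have [_ Glin _] := FP _ FG; exact: Glin G1 G2.
- by move=> y r [G FG Gyr]; have [_ _ Gle] := FP _ FG; exact: Gle Gyr.
Qed.

Section OneStepExtension.
Variables (G : set (V * R)) (x : V).
Hypotheses (GP : dominated_linear_graph G) (G00 : G (0, 0))
  (Gx : forall r, ~ G (x, r)).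

Let graphZ a y r : G (y, r) -> G (a *: y, a * r).
Proof.
by have [_ Glin _] := GP => Gyr; have := Glin a _ _ _ _ Gyr G00; rewrite !addr0.
Qed.

Lemma extension_constant : exists c : R,
  forall d r, G (d, r) -> r + c <= q (d + x) /\ r - c <= q (d - x).
Proof.
have [_ Glin Gle] := GP.
have sep d r d' r' : G (d, r) -> G (d', r') -> r - q (d - x) <= q (d' + x) - r'.
  move=> Gdr Gdr'; have := Gle _ _ (Glin 1 _ _ _ _ Gdr Gdr').
  have := qD (d - x) (d' + x).
  rewrite scale1r mul1r addrACA addNr addr0; lra.
pose E := [set p.2 - q (p.1 - x) | p in G].
have Eub d' r' : G (d', r') -> ubound E (q (d' + x) - r').
  by move=> Gdr' _ [[d r] Gdr <-]; exact: sep Gdr Gdr'.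
have E0 : E (0 - q (0 - x)) by exists (0, 0).
have Esup : has_sup E.
  by split; [exists (0 - q (0 - x)) | exists (q (0 + x) - 0); exact: Eub].
exists (sup E) => d r Gdr; split.
  by have := ge_sup (ex_intro _ _ E0) (Eub _ _ Gdr); lra.
have : r - q (d - x) <= sup E by apply: sup_upper_bound => //; exists (d, r).
lra.
Qed.

Definition extension (c : R) : set (V * R) :=
  [set p | exists d r t, G (d, r) /\ p = (d + t *: x, r + t * c)].

Lemma extension_dominated c :
    (forall d r, G (d, r) -> r + c <= q (d + x) /\ r - c <= q (d - x)) ->
  dominated_linear_graph (extension c).
Proof.
have [Gfun Glin Gle] := GP; move=> c_bounds; split.
- move=> _ r r' [d [s [t [Gds [-> ->]]]]] [d' [s' [t' [Gds' []]]]] E ->.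
  have [tt'|tt'] := eqVneq t t'.
    move: E; rewrite -tt' => /addIr dd'.
    by rewrite dd' in Gds; rewrite (Gfun _ _ _ Gds Gds').
  case: (@Gx ((t - t')^-1 * (s' - s))).
  have -> : x = (t - t')^-1 *: (d' - d).
    apply: (@scalerI _ _ (t - t')); first by rewrite subr_eq0.
    rewrite scalerA mulfV ?subr_eq0 // scale1r scalerBl.
    by apply/eqP; rewrite subr_eq eq_sym addrAC subr_eq -E addrC.
  apply: graphZ; have := Glin (-1) _ _ _ _ Gds Gds'.
  by rewrite scaleN1r mulN1r addrC [_ + - s]addrC.
- move=> a _ _ _ _ [d1 [s1 [t1 [G1 [-> ->]]]]] [d2 [s2 [t2 [G2 [-> ->]]]]].
  exists (a *: d1 + d2), (a * s1 + s2), (a * t1 + t2); split; first exact: Glin.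
  congr (_, _); last by ring.
  by rewrite scalerDr scalerDl scalerA addrACA.
- move=> _ _ [d [s [t [Gds [-> ->]]]]].
  have [t0|t0|<-] := ltgtP 0 t; last by rewrite scale0r mul0r !addr0; exact: Gle.
  + have := (c_bounds _ _ (graphZ t^-1 Gds)).1.
    have -> : d + t *: x = t *: (t^-1 *: d + x).
      by rewrite scalerDr scalerA mulfV ?gt_eqF // scale1r.
    rewrite qZ // -(ler_pM2l t0) mulrDr mulrA mulfV ?gt_eqF //; lra.
  + have u0 : 0 < - t by rewrite oppr_gt0.
    have := (c_bounds _ _ (graphZ (- t)^-1 Gds)).2.
    have -> : d + t *: x = (- t) *: ((- t)^-1 *: d - x).
      by rewrite scalerBr scalerA mulfV ?lt0r_neq0 // scale1r scaleNr opprK.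
    rewrite qZ // -(ler_pM2l u0) mulrBr mulrA mulfV ?lt0r_neq0 //; lra.
Qed.

End OneStepExtension.

Theorem hahn_banach_sublinear : exists psi : V -> R,
  (forall a u v, psi (a *: u + v) = a * psi u + psi v) /\ forall u, psi u <= q u.
Proof.
have [G [GP Gmax]] := Zorn_bigcup dominated_linear_graph_bigcup.
have [Gfun Glin Gle] := GP.
have G00 : G (0, 0).
  apply: contrapT => nG00; apply: (Gmax [set (0, 0)]); last first.
    split.
    - by move=> y r r' [_ ->] [_ ->].
    - by move=> a _ _ _ _ [-> ->] [-> ->]; rewrite scaler0 addr0 mulr0 addr0.
    - by move=> y r [-> ->]; rewrite sublinear0.
  split; last by move=> /(_ (0, 0) erefl).
  move=> [y r] Gyr; exfalso; apply: nG00.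
  by have := Glin (-1) _ _ _ _ Gyr Gyr; rewrite scaleN1r mulN1r !addNr.
have Gtotal u : exists r, G (u, r).
  apply: contrapT => /forallNP Gu.
  have [c c_bounds] := extension_constant u GP G00.
  apply: (Gmax (extension G u c)); last exact: extension_dominated.
  split; first by move=> [y r] Gyr; exists y, r, 0; rewrite scale0r mul0r !addr0.
  move=> /(_ (u, c)) Gu'; apply: (Gu c); apply: Gu'.
  by exists 0, 0, 1; rewrite scale1r mul1r !add0r.
have [psi Gpsi] := choice Gtotal.
exists psi; split => [a u v|u]; last exact: Gle (Gpsi u).
exact: Gfun (Gpsi _) (Glin _ _ _ _ _ (Gpsi u) (Gpsi v)).
Qed.

End HahnBanach.

Section LinearContinuity.
Context {R : realType} {Y : tvsType R}.

Lemma nbhs0_absorbing (W : set Y) (u : Y) :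
  nbhs 0 W -> exists2 t : R, 0 < t & W (t *: u).
Proof.
move=> W0; have := @scale_continuous R Y (0, u) W.
rewrite /= scale0r => /(_ W0) [/= B [B1 B2] BU].
have [e e0 He] := (nbhs_ballP _ _).1 B1.
exists (e / 2); first by rewrite divr_gt0.
apply: (BU (e / 2, u)); split => /=; last exact: nbhs_singleton.
apply: He; rewrite /ball /= sub0r normrN gtr0_norm ?divr_gt0 //.
by rewrite ltr_pdivrMr // ltr_pMr // ltr1n.
Qed.

Lemma linear_continuous_ubound (psi : {linear Y -> R^o}) (W : set Y) (M : R) :
  nbhs 0 W -> (forall u, W u -> psi u <= M) -> continuous (psi : Y -> R^o).
Proof.
move=> W0 WM.
pose W2 := W `&` [set - w | w in W].
have W20 : nbhs 0 W2 by apply: filterI => //; exact: nbhs0N.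
have W2M u : W2 u -> `|psi u| <= M.
  move=> [Wu [w Ww wu]]; rewrite ler_norml WM // andbT.
  by rewrite -wu raddfN lerN2; exact: WM.
have M0 : 0 <= M by apply: le_trans (W2M 0 (nbhs_singleton W20)).
move=> x; apply/cvgrPdist_le => e e0.
pose k := e / (M + 1).
have k0 : 0 < k by rewrite divr_gt0 // ltr_wpDl.
have := nbhsT x (nbhs0Z (lt0r_neq0 k0) W20).
apply: filterS => _ [_ [w Ww <-] <-].
rewrite linearD linearZ /= opprD addrA subrr sub0r normrN normrM gtr0_norm //.
apply: le_trans (_ : k * M <= e).
  by rewrite ler_pM2l //; exact: W2M.
rewrite /k mulrAC ler_pdivrMr ?ltr_wpDl // ler_pM2l //; lra.
Qed.
End LinearContinuity.

Lemma econvex_ub {R : realType} {V : lmodType R} (f : V -> \bar R)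
    (t : R) (y1 y2 : V) (r1 r2 : R) :
  econvex f -> 0 < t < 1 -> (f y1 <= r1%:E)%E -> (f y2 <= r2%:E)%E ->
  (f (t *: y1 + (1 - t) *: y2)%R <= (t * r1 + (1 - t) * r2)%:E)%E.
Proof.
move=> fC t01 f1 f2; apply: le_trans (fC _ _ _ t01) _.
have /andP[t0 t1] := t01.
rewrite [leRHS]dEFinD; apply: lee_dD; rewrite EFinM;
  apply: lee_wpmul2l => //; by rewrite lee_fin ?subr_ge0 ltW.
Qed.

Section Separation.
Context {R : realType} {Y : tvsType R}.
Variables (h g : Y -> \bar R) (a h0 g0 : R) (y0 : Y).
Hypotheses (hC : econvex h) (gC : econvex g).
Hypotheses (hy0 : h y0 = h0%:E) (gy0 : g y0 = g0%:E).
Hypothesis gcont : {for y0, continuous g}.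
Hypothesis a_le : forall y, (a%:E <= (h y + g y)%dE)%E.

(* cone_section u is the fibre over u of the cone generated by the points
   (y - z, rh + rg - a); cone_gauge below is its lower boundary. *)
Definition cone_section (u : Y) : set R := [set e | exists t y z rh rg,
  [/\ 0 < t, y - z = t *: u, (h y <= rh%:E)%E, (g z <= rg%:E)%E &
      e = (rh + rg - a) / t]].

Let U := [set z | (g z < (g0 + 1)%:E)%E].
Let W := [set y0 - z | z in U].

Let W_nbhs : nbhs 0 W.
Proof.
have U_nbhs : nbhs y0 U.
  have : nbhs (g y0) [set e | (e < (g0 + 1)%:E)%E].
    by rewrite gy0; apply: open_ereal_lt'; rewrite lte_fin ltrDl ltr01.
  exact: gcont.
have := nbhsB (- y0) U_nbhs; rewrite addNr => /nbhs0N.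
by apply: filterS => _ [_ [z Uz <-] <-]; exists z; rewrite // opprD opprK addrC.
Qed.

Let a_le_real y rh rg : (h y <= rh%:E)%E -> (g y <= rg%:E)%E -> a <= rh + rg.
Proof.
move=> hy gy; rewrite -lee_fin; apply: le_trans (a_le y) _.
by rewrite dEFinD; apply: lee_dD.
Qed.

Lemma cone_section1 y z rh rg : (h y <= rh%:E)%E -> (g z <= rg%:E)%E ->
  cone_section (y - z) (rh + rg - a).
Proof. by exists 1, y, z, rh, rg; rewrite scale1r divr1. Qed.

Lemma cone_section_neq0 u : cone_section u !=set0.
Proof.
have [t t0 [z Uz zu]] := nbhs0_absorbing u W_nbhs.
exists ((h0 + (g0 + 1) - a) / t), t, y0, z, h0, (g0 + 1).
by split; rewrite ?hy0 ?zu // ltW.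
Qed.

Lemma cone_section_addN_ge0 u e e' :
  cone_section u e -> cone_section (- u) e' -> 0 <= e + e'.
Proof.
move=> [t [y [z [rh [rg [t0 yz hy gz ->]]]]]].
move=> [s [y' [z' [rh' [rg' [s0 yz' hy' gz' ->]]]]]].
pose l := s / (t + s).
have ts0 : 0 < t + s by rewrite addr_gt0.
have l01 : 0 < l < 1 by rewrite divr_gt0 //= ltr_pdivrMr // mul1r ltrDr.
have lE : (1 - l) * s = l * t by rewrite /l; field; rewrite lt0r_neq0.
have wE : l *: y + (1 - l) *: y' = l *: z + (1 - l) *: z'.
  move/eqP: yz; rewrite subr_eq => /eqP ->.
  move/eqP: yz'; rewrite subr_eq => /eqP ->.
  rewrite !scalerDr !scalerA scalerN lE addrACA.
  by rewrite -(addrA (_ *: u)) (addrC (_ *: z)) addrA subrr add0r.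
have hw := econvex_ub hC l01 hy hy'; rewrite wE in hw.
have := a_le_real hw (econvex_ub gC l01 gz gz').
have -> : (rh + rg - a) / t + (rh' + rg' - a) / s =
  (t + s) / (t * s) * (l * (rh + rg - a) + (1 - l) * (rh' + rg' - a)).
  by rewrite /l; field; rewrite !lt0r_neq0.
move=> le_a; apply: mulr_ge0; first by rewrite divr_ge0 ?mulr_ge0 // ltW.
lra.
Qed.

Lemma cone_section_lbound u : has_lbound (cone_section u).
Proof.
have [e' Se'] := cone_section_neq0 (- u).
by exists (- e') => e Se; have := cone_section_addN_ge0 Se Se'; lra.
Qed.

Lemma cone_sectionD u1 u2 e1 e2 : cone_section u1 e1 -> cone_section u2 e2 ->
  cone_section (u1 + u2) (e1 + e2).
Proof.
move=> [t1 [y1 [z1 [rh1 [rg1 [t10 yz1 hy1 gz1 ->]]]]]].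
move=> [t2 [y2 [z2 [rh2 [rg2 [t20 yz2 hy2 gz2 ->]]]]]].
pose l := t2 / (t1 + t2).
have ts0 : 0 < t1 + t2 by rewrite addr_gt0.
have l01 : 0 < l < 1 by rewrite divr_gt0 //= ltr_pdivrMr // mul1r ltrDr.
pose T := t1 * t2 / (t1 + t2).
exists T, (l *: y1 + (1 - l) *: y2), (l *: z1 + (1 - l) *: z2),
  (l * rh1 + (1 - l) * rh2), (l * rg1 + (1 - l) * rg2); split.
- by rewrite /T !divr_gt0 // mulr_gt0.
- rewrite opprD addrACA -!scalerBr yz1 yz2 !scalerA scalerDr.
  have -> : l * t1 = T by rewrite /l /T; field; rewrite lt0r_neq0.
  suff -> : (1 - l) * t2 = T by [].
  by rewrite /l /T; field; rewrite lt0r_neq0.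
- exact: econvex_ub.
- exact: econvex_ub.
- by rewrite /l /T; field; rewrite !lt0r_neq0.
Qed.

Lemma cone_sectionZ (r : R) u e : 0 < r -> cone_section u e ->
  cone_section (r *: u) (r * e).
Proof.
move=> r0 [t [y [z [rh [rg [t0 yz hy gz ->]]]]]].
exists (t / r), y, z, rh, rg; split => //.
- by rewrite divr_gt0.
- by rewrite scalerA mulfVK // lt0r_neq0.
- by field; rewrite !lt0r_neq0.
Qed.

Definition cone_gauge (u : Y) : R := inf (cone_section u).

Lemma cone_gauge_le u e : cone_section u e -> cone_gauge u <= e.
Proof. by move=> Se; exact: ge_inf (cone_section_lbound u) _ Se. Qed.

Lemma cone_gauge_ge u x : (forall e, cone_section u e -> x <= e) -> x <= cone_gauge u.
Proof. by move=> Sx; exact: lb_le_inf (cone_section_neq0 u) Sx. Qed.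

Lemma cone_gaugeD u1 u2 : cone_gauge (u1 + u2) <= cone_gauge u1 + cone_gauge u2.
Proof.
suff : cone_gauge (u1 + u2) - cone_gauge u1 <= cone_gauge u2 by lra.
apply: cone_gauge_ge => e2 S2; suff : cone_gauge (u1 + u2) - e2 <= cone_gauge u1 by lra.
apply: cone_gauge_ge => e1 S1; suff : cone_gauge (u1 + u2) <= e1 + e2 by lra.
exact/cone_gauge_le/cone_sectionD.
Qed.

Lemma cone_gaugeZ (r : R) u : 0 < r -> cone_gauge (r *: u) = r * cone_gauge u.
Proof.
move=> r0; apply/eqP; rewrite eq_le; apply/andP; split.
- have : cone_gauge (r *: u) / r <= cone_gauge u.
    apply: cone_gauge_ge => e /(cone_sectionZ r0)/cone_gauge_le.
    by rewrite ler_pdivrMr // mulrC.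
  by rewrite ler_pdivrMr // mulrC.
- have r'0 : 0 < r^-1 by rewrite invr_gt0.
  apply: cone_gauge_ge => e /(cone_sectionZ r'0).
  rewrite scalerA mulVf ?lt0r_neq0 // scale1r => /cone_gauge_le.
  by rewrite ler_pdivlMl // mulrC.
Qed.

Theorem convex_separation : exists2 l : {linear Y -> R^o}, continuous l &
  forall y z rh rg, (h y <= rh%:E)%E -> (g z <= rg%:E)%E ->
    l y - l z <= rh + rg - a.
Proof.
have [psi [psi_lin psi_le]] := hahn_banach_sublinear cone_gaugeD cone_gaugeZ.
pose l : {linear Y -> R^o} :=
  HB.pack psi (GRing.isLinear.Build R Y R^o *:%R psi psi_lin).
exists l.
  apply: (@linear_continuous_ubound _ _ l W (h0 + (g0 + 1) - a) W_nbhs).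
  move=> _ [z Uz <-]; apply: le_trans (psi_le _) (cone_gauge_le _).
  by apply: cone_section1; rewrite ?hy0 // ltW.
move=> y z rh rg hy gz; rewrite -raddfB.
exact: le_trans (psi_le _) (cone_gauge_le (cone_section1 hy gz)).
Qed.

End Separation.

Local Open Scope ereal_scope.

Section ExtendedRealSup.
Context {R : realType}.
Implicit Types (x y a : \bar R) (S : set \bar R).

Lemma lee_adde_dadde x y : x + y <= (x + y)%dE.
Proof. by case: x => [x| |]; case: y => [y| |]. Qed.

Lemma dual_addeE_neqNy x y : x != -oo -> y != -oo -> (x + y)%dE = x + y.
Proof. by case: x => [x| |]; case: y => [y| |]. Qed.

Lemma oppe_ereal_inf_range {T : Type} (f : T -> \bar R) :
  - ereal_inf (range f) = ereal_sup (range (fun t => - f t)).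
Proof. by rewrite -ereal_supN image_comp. Qed.

Lemma ereal_supDl a S : a + ereal_sup S = ereal_sup [set a + s | s in S].
Proof.
apply/eqP; rewrite eq_le; apply/andP; split; last first.
  by apply: ge_ereal_sup => _ [s Ss <-]; apply: leeD2l; exact: ereal_sup_ubound.
case: a => [r| |].
- have addKe (r' : R) z : r'%:E + ((- r')%:E + z) = z.
    by case: z => [z| |] //=; rewrite -!EFinD addNKr.
  rewrite -[leRHS](addKe r); apply: leeD2l.
  apply: ge_ereal_sup => s Ss; rewrite -[s](addKe (- r)%R) opprK; apply: leeD2l.
  by apply: ereal_sup_ubound; exists s.
- have [->|] := eqVneq (ereal_sup S) -oo; first by rewrite addeNy leNye.
  rewrite -ltNye => /ereal_sup_gt[s Ss sNy].
  suff -> : ereal_sup [set +oo + s | s in S] = +oo by exact: leey.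
  by apply: ereal_supy; exists s => //; case: s sNy {Ss}.
- by rewrite leNye.
Qed.

Lemma ereal_supDr a S : ereal_sup S + a = ereal_sup [set s + a | s in S].
Proof.
by rewrite addeC ereal_supDl; congr ereal_sup; apply: eq_imagel => s _; rewrite addeC.
Qed.

Lemma ereal_sup_adde_le (A B : set \bar R) c :
  (forall x y, A x -> B y -> x + y <= c) -> ereal_sup A + ereal_sup B <= c.
Proof.
move=> AB; rewrite ereal_supDr; apply: ge_ereal_sup => _ [x Ax <-].
by rewrite ereal_supDl; apply: ge_ereal_sup => _ [y By <-]; exact: AB.
Qed.

Lemma ereal_sup_range_swap {I J : Type} (F : I -> J -> \bar R) :
  ereal_sup (range (fun i => ereal_sup (range (F i)))) =
  ereal_sup (range (fun j => ereal_sup (range (fun i => F i j)))).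
Proof.
apply/eqP; rewrite eq_le; apply/andP; split.
- apply: ge_ereal_sup => _ [i _ <-]; apply: ge_ereal_sup => _ [j _ <-].
  apply: le_ereal_sup_tmp; exists (ereal_sup (range (fun i => F i j))); first by exists j.
  by apply: ereal_sup_ubound; exists i.
- apply: ge_ereal_sup => _ [j _ <-]; apply: ge_ereal_sup => _ [i _ <-].
  apply: le_ereal_sup_tmp; exists (ereal_sup (range (F i))); first by exists i.
  by apply: ereal_sup_ubound; exists j.
Qed.

Lemma ereal_sup_range_pair {I J : Type} (F : I -> J -> \bar R) :
  ereal_sup (range (fun p : I * J => F p.1 p.2)) =
  ereal_sup (range (fun j => ereal_sup (range (fun i => F i j)))).
Proof.
apply/eqP; rewrite eq_le; apply/andP; split.
- apply: ge_ereal_sup => _ [[i j] _ <-] /=.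
  apply: le_ereal_sup_tmp; exists (ereal_sup (range (fun i => F i j))); first by exists j.
  by apply: ereal_sup_ubound; exists i.
- apply: ge_ereal_sup => _ [j _ <-]; apply: ge_ereal_sup => _ [i _ <-].
  by apply: ereal_sup_ubound; exists (i, j).
Qed.

End ExtendedRealSup.

Section FenchelDuality.
Context {R : realType} {Y : tvsType R}.
Implicit Types (h g : Y -> \bar R) (l : {linear Y -> R^o}).

Definition fconj h l : \bar R := ereal_sup (range (fun y => (l y)%:E + - h y)).

Lemma fenchel_weak h g l :
  - ereal_inf (range (fun y => (h y + g y)%dE)) <= (fconj h l + mdconj g l)%dE.
Proof.
rewrite oppe_ereal_inf_range; apply: ge_ereal_sup => _ [y _ <-].
apply: le_trans (lee_adde_dadde _ _); rewrite dual_addeE oppeK.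
(* Lower addition is associative even with infinite values, so no case split. *)
have -> : - h y + - g y = ((l y)%:E + - h y) + ((- l y)%:E + - g y).
  by rewrite addeACA -EFinD subrr add0e.
by apply: leeD; apply: ereal_sup_ubound; exists y.
Qed.

Lemma fenchel_strong h g (y0 : Y) :
  econvex h -> econvex g -> (forall y, h y != -oo) -> (forall y, g y != -oo) ->
  h y0 \is a fin_num -> g y0 \is a fin_num -> {for y0, continuous g} ->
  ereal_inf [set (fconj h l + mdconj g l)%dE | l in @tdual R Y] <=
    - ereal_inf (range (fun y => (h y + g y)%dE)).
Proof.
move=> hC gC hN gN hy0 gy0 gcont.
have [r0 hy0E] : exists r0, h y0 = r0%:E by exists (fine (h y0)); rewrite fineK.
have [s0 gy0E] : exists s0, g y0 = s0%:E by exists (fine (g y0)); rewrite fineK.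
set m := (X in _ <= - X).
have : m <= (r0 + s0)%:E.
  by rewrite dEFinD -hy0E -gy0E; apply: ereal_inf_lbound; exists y0.
case Em : m => [a| |] // _; last by rewrite leey.
have a_le y : a%:E <= (h y + g y)%dE by rewrite -Em; apply: ereal_inf_lbound; exists y.
have [l lc lsep] := convex_separation hC gC hy0E gy0E gcont a_le.
apply: (@le_trans _ _ (fconj h l + mdconj g l)%dE).
  by apply: ereal_inf_lbound; exists l.
rewrite dual_addeE_neqNy; first last.
- apply/eqP => /ereal_sup_ninfty /(_ _ (imageT _ y0)); by rewrite /= gy0E.
- apply/eqP => /ereal_sup_ninfty /(_ _ (imageT _ y0)); by rewrite /= hy0E.
apply: ereal_sup_adde_le => _ _ [y _ <-] [z _ <-].
move: (lsep y z) (hN y) (gN z).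
case: (h y) => [hr| |]; case: (g z) => [gr| |] //= sep _ _; rewrite ?leNye //.
by rewrite -!EFinD lee_fin; have := sep hr gr (lexx _) (lexx _); lra.
Qed.

Theorem fenchel_duality h g (y0 : Y) :
  econvex h -> econvex g -> (forall y, h y != -oo) -> (forall y, g y != -oo) ->
  h y0 \is a fin_num -> g y0 \is a fin_num -> {for y0, continuous g} ->
  - ereal_inf (range (fun y => (h y + g y)%dE)) =
    ereal_inf [set (fconj h l + mdconj g l)%dE | l in @tdual R Y].
Proof.
move=> hC gC hN gN hy0 gy0 gcont; apply/eqP; rewrite eq_le.
rewrite (fenchel_strong hC gC hN gN hy0 gy0 gcont) andbT.
by apply: le_ereal_inf_tmp => _ [l _ <-]; exact: fenchel_weak.
Qed.

End FenchelDuality.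

Section CouplingConjugates.
Context {R : realType} {Y : tvsType R} {X Xs : Type}.
Variables (c : X -> Xs -> \bar R) (K : X -> Y -> \bar R) (xs : Xs).

Lemma oppe_Kxs y : - Kxs c K xs y = ereal_sup (range (fun x => c x xs + - K x y)).
Proof.
rewrite oppe_ereal_inf_range; congr ereal_sup.
by apply: eq_imagel => x _; rewrite dual_addeE !oppeK.
Qed.

Lemma cdconj_Kxs l : cdconj c K xs l = fconj (Kxs c K xs) l.
Proof.
rewrite /cdconj (ereal_sup_range_pair (fun x y => c x xs + (l y)%:E + - K x y)).
congr ereal_sup; apply: eq_imagel => y _.
rewrite oppe_Kxs ereal_supDl image_comp; congr ereal_sup.
by apply: eq_imagel => x _ /=; rewrite addeCA addeA.
Qed.

Lemma cconj_inf_convolution (f : X -> \bar R) (g : Y -> \bar R) :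
    (forall x, f x = ereal_inf (range (fun y => (K x y + g y)%dE))) ->
  cconj c f xs = - ereal_inf (range (fun y => (Kxs c K xs y + g y)%dE)).
Proof.
move=> fE.
have cfE x : c x xs + - f x = ereal_sup (range (fun y => c x xs + (- K x y + - g y))).
  rewrite fE oppe_ereal_inf_range ereal_supDl image_comp; congr ereal_sup.
  by apply: eq_imagel => y _ /=; rewrite dual_addeE oppeK.
rewrite /cconj (funext cfE) oppe_ereal_inf_range ereal_sup_range_swap.
congr ereal_sup; apply: eq_imagel => y _.
rewrite dual_addeE oppeK oppe_Kxs ereal_supDr image_comp; congr ereal_sup.
by apply: eq_imagel => x _ /=; rewrite addeA.
Qed.

End CouplingConjugates.

Theorem corollary3 (R : realType) (Y : tvsType R) (X Xs : Type)
  (c : X -> Xs -> \bar R) (K : X -> Y -> \bar R) (f : X -> \bar R)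
  (g : Y -> \bar R) :
  hausdorff_space Y ->
  (forall y, g y != -oo) ->
  eproper g -> econvex g ->
  (forall xs, eproper (Kxs c K xs) /\ econvex (Kxs c K xs)) ->
  (forall xs, exists y0 : Y, Kxs c K xs y0 \is a fin_num /\
      g y0 \is a fin_num /\ {for y0, continuous g}) ->
  (forall x, f x = ereal_inf (range (fun y => (K x y + g y)%dE))) ->
  forall xs, cconj c f xs =
    ereal_inf [set (cdconj c K xs ys + mdconj g ys)%dE | ys in @tdual R Y].
Proof.
move=> _ gN _ gC KxsP gcont fE xs.
have [[KxsN _] KxsC] := KxsP xs.
have [y0 [Ky0 [gy0 gy0cont]]] := gcont xs.
rewrite (cconj_inf_convolution c xs fE).
rewrite (fenchel_duality KxsC gC KxsN gN Ky0 gy0 gy0cont).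
by congr ereal_inf; apply: eq_imagel => l _; rewrite cdconj_Kxs.
Qed.
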